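(* Consider U-PB$(\hat x_0,\chi,\lambda_0,\bar\varepsilon,\overline N)$ described in the context. Let $j$ be an iteration of a cycle with prox stepsize $\lambda$ and first iteration $i$, and suppose $t_j>(1-\chi)\bar\varepsilon/2$. Then \[ j-i<(1+u_\lambda)\log\left(\frac{4t_i}{(1-\chi)\bar\varepsilon}\right),\qquad u_\lambda:=\frac{4\lambda[2M_f^2+(1-\chi)\bar\varepsilon L_f]}{(1-\chi)\bar\varepsilon}. \]
   Context: Setting: $f,h:\mathbb{R}^n\to\mathbb{R}\cup\{+\infty\}$ proper lsc convex, $\mathrm{dom}\, h\subseteq\mathrm{dom}\, f$, $\phi=f+h$, $\phi_*=\inf\phi$ attained. Subgradient oracle $f'(x)\in\partial f(x)$ on $\mathrm{dom}\, h$ with $\|f'(x)-f'(y)\|\le2M_f+L_f\|x-y\|$ for $x,y\in\mathrm{dom}\, h$, $M_f,L_f\ge0$. $\ell_f(u;x):=f(x)+\langle f'(x),u-x\rangle$. ''Convex function'' means proper lsc convex on $\mathbb{R}^n$. BU$(x^c,x,m_f,\lambda)$: given $\lambda>0$, convex $m_f\le f$ with $x=\mathrm{argmin}_u\{m_f(u)+h(u)+\frac1{2\lambda}\|u-x^c\|^2\}$, outputs any convex $m_f^+$ with $\max\{\overline m_f,\ell_f(\cdot;x)\}\le m_f^+\le f$, where $\overline m_f\le f$, $\overline m_f(x)=m_f(x)$ and $x=\mathrm{argmin}_u\{\overline m_f(u)+h(u)+\frac1{2\lambda}\|u-x^c\|^2\}$. U-PB$(\hat x_0,\chi,\lambda_0,\bar\varepsilon,\overline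 N)$, inputs in $\mathrm{dom}\, h\times[0,1)\times\mathbb{R}_{++}\times\mathbb{R}_{++}\times\{1,2,\ldots\}$: Step 0: $\lambda=\lambda_0$, $N=0$, $j=1$, $k=1$; choose convex $f_1$ with $\ell_f(\cdot;\hat x_0)\le f_1\le f$. Step 1: $x_j=\mathrm{argmin}_u\{(f_j+h)(u)+\frac1{2\lambda}\|u-\hat x_{k-1}\|^2\}$; if $\phi(x_j)-\phi_*\le\bar\varepsilon$ stop. Step 2: $\bar\phi_j=\phi(x_j)+\frac\chi{2\lambda}\|x_j-\hat x_{k-1}\|^2$ if $N=0$, else $\bar\phi_j=\min\{\bar\phi_{j-1},\phi(x_j)+\frac\chi{2\lambda}\|x_j-\hat x_{k-1}\|^2\}$; $N=N+1$; $t_j=\bar\phi_j-[(f_j+h)(x_j)+\frac1{2\lambda}\|x_j-\hat x_{k-1}\|^2]$. Step 3: if $t_j>(1-\chi)\bar\varepsilon/2$ and $N<\overline N$: null update $f_{j+1}=\mathrm{BU}(\hat x_{k-1},x_j,f_j,\lambda)$. Otherwise: if $t_j>(1-\chi)\bar\varepsilon/2$ and $N=\overline N$, reset update $\lambda\leftarrow\lambda/2$; else serious update $\hat x_k=x_j$, $\lambda_k=\lambda$, $k\leftarrow k+1$; then set $N=0$ and choose convex $f_{j+1}$ with $\ell_f(\cdot;\hat x_{k-1})\le f_{j+1}\le f$. Step 4: $j\leftarrow j+1$, go to Step 1. A cycle is a reset or serious iteration together with all consecutive null iterations immediately preceding it; its iterations share the same prox stepsize $\lambda$ and prox-center $\hat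 x_{k-1}$, and its first iteration is the one at which $N=0$ when entering Step 2. *)

(* R : realType, vectors of R^n are 'rV[R]_n,
   extended-real valued functions R^n -> R U {+oo} are modelled as 'rV[R]_n -> \bar R
   (properness excludes the value -oo). *)
From mathcomp Require Import all_boot all_order all_algebra.
From mathcomp Require Import all_classical all_reals all_analysis.
Set Implicit Arguments. Unset Strict Implicit. Unset Printing Implicit Defensive.
Import Order.TTheory GRing.Theory Num.Theory.
Import numFieldNormedType.Exports.
Local Open Scope ring_scope.
Local Open Scope classical_set_scope.

Section UPB.
Variables (R : realType) (n : nat).
Local Notation vec := ('rV[R]_n).

Definition dotv (u v : vec) : R := \sum_(i < n) u 0 i * v 0 i.
Definition norm2 (u : vec) : R := Num.sqrt (dotv u u).

Definition edom (f : vec -> \bar R) : set vec := [set x | (f x < +oo)%E].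

Definition proper_fun (f : vec -> \bar R) : Prop :=
  (forall x, f x <> -oo%E) /\ exists x, (f x < +oo)%E.

Definition lsc_fun (f : vec -> \bar R) : Prop :=
  forall (a : R) (u : nat -> vec) (x : vec),
    (fun k => norm2 (u k - x)) @ \oo --> 0%R ->
    (forall k, (f (u k) <= a%:E)%E) -> (f x <= a%:E)%E.

Definition convex_fun (f : vec -> \bar R) : Prop :=
  forall (x y : vec) (s : R), 0 < s < 1 ->
    (f (s *: x + (1 - s) *: y)%R <= s%:E * f x + (1 - s)%:E * f y)%E.

(* "convex function" = proper lsc convex function on R^n *)
Definition cvx (f : vec -> \bar R) : Prop :=
  [/\ proper_fun f, lsc_fun f & convex_fun f].

Definition fle (f g : vec -> \bar R) : Prop := forall u, (f u <= g u)%E.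

Definition subgrad (f : vec -> \bar R) (x g : vec) : Prop :=
  (f x < +oo)%E /\ forall u, (f x + (dotv g (u - x))%:E <= f u)%E.

Definition is_argmin (F : vec -> \bar R) (x : vec) : Prop :=
  forall u, (F x <= F u)%E.

Definition lin (f : vec -> \bar R) (f' : vec -> vec) (x : vec) : vec -> \bar R :=
  fun u => (f x + (dotv (f' x) (u - x))%:E)%E.

Definition proxobj (m h : vec -> \bar R) (lam : R) (xc : vec) : vec -> \bar R :=
  fun u => (m u + h u + (norm2 (u - xc) ^+ 2 / (2 * lam))%:E)%E.

Definition BU_out (f h : vec -> \bar R) (f' : vec -> vec)
    (xc x : vec) (m : vec -> \bar R) (lam : R) (mplus : vec -> \bar R) : Prop :=
  cvx mplus /\
  exists mbar : vec -> \bar R,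
    [/\ cvx mbar /\ fle mbar f, mbar x = m x,
        is_argmin (proxobj mbar h lam xc) x,
        fle (fun u => maxe (mbar u) (lin f f' x u)) mplus & fle mplus f].

(* A run of U-PB(x0hat, chi, lam0, eps, Nbar) in which iterations 1..J reach Step 2
   (i.e. the algorithm has not stopped at Step 1 of any iteration j <= J).
   For iteration j >= 1:
     lam j  = prox stepsize used at iteration j,
     ctr j  = prox center  \hat x_{k-1} used at iteration j,
     mdl j  = bundle model f_j,
     x j    = x_j,
     Nc j   = value of the counter N when entering Step 2 of iteration j,
     pb j   = \bar\phi_j,   t j = t_j. *)
Definition UPB_run (f h : vec -> \bar R) (f' : vec -> vec) (phistar : R)
    (x0hat : vec) (chi lam0 eps : R) (Nbar : nat) (J : nat)
    (lam : nat -> R) (ctr : nat -> vec) (mdl : nat -> vec -> \bar R)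
    (x : nat -> vec) (Nc : nat -> nat) (pb t : nat -> R) : Prop :=
  let phi := fun u => (f u + h u)%E in
  let thr := (1 - chi) * eps / 2 in
  [/\
   [/\ lam 1%N = lam0, ctr 1%N = x0hat, Nc 1%N = 0%N,
       cvx (mdl 1%N) & fle (lin f f' x0hat) (mdl 1%N) /\ fle (mdl 1%N) f],
   (forall j, (1 <= j <= J)%N ->
     [/\ is_argmin (proxobj (mdl j) h (lam j) (ctr j)) (x j),
         ~ (phi (x j) - phistar%:E <= eps%:E)%E,
         (pb j)%:E = (if Nc j == 0%N
                      then phi (x j) + (chi / (2 * lam j) * norm2 (x j - ctr j) ^+ 2)%:E
                      else mine (pb j.-1)%:E
                             (phi (x j) + (chi / (2 * lam j) * norm2 (x j - ctr j) ^+ 2)%:E))%E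
       & (t j)%:E = ((pb j)%:E - (mdl j (x j) + h (x j)
                       + (norm2 (x j - ctr j) ^+ 2 / (2 * lam j))%:E))%E])
   &
   (forall j, (1 <= j < J)%N ->
     if (thr < t j) && (Nc j + 1 < Nbar)%N then
       (* null update *)
       [/\ lam j.+1 = lam j, ctr j.+1 = ctr j, Nc j.+1 = (Nc j + 1)%N
         & BU_out f h f' (ctr j) (x j) (mdl j) (lam j) (mdl j.+1)]
     else if thr < t j then
       (* reset update (here N = Nbar) *)
       [/\ lam j.+1 = lam j / 2, ctr j.+1 = ctr j, Nc j.+1 = 0%N,
           cvx (mdl j.+1) & fle (lin f f' (ctr j.+1)) (mdl j.+1) /\ fle (mdl j.+1) f]
     else
       (* serious update *)
       [/\ lam j.+1 = lam j, ctr j.+1 = x j, Nc j.+1 = 0%N,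
           cvx (mdl j.+1) & fle (lin f f' (ctr j.+1)) (mdl j.+1) /\ fle (mdl j.+1) f])].

End UPB.

From mathcomp Require Import all_boot all_order all_algebra.
From mathcomp Require Import all_classical all_reals all_analysis.
From mathcomp Require Import ring lra.
Set Implicit Arguments. Unset Strict Implicit. Unset Printing Implicit Defensive.
Import Order.TTheory GRing.Theory Num.Theory.
Local Open Scope ring_scope.
Local Open Scope classical_set_scope.

(* Within a cycle the prox center and the stepsize stay fixed and every step is a null
   update.  For consecutive iterates x_k, x_(k+1) at distance D, the gap t_(k+1) is bounded
   both by t_k - D^2/(2 lam), because the new model dominates the old one, whose prox
   objective grows quadratically away from its minimizer x_k, and by (2 M + L D) D, because
   the new model dominates the linearization of f at x_k.  A convex combination of the two
   bounds, with AM-GM on 2 M D, eliminates D and yields the contraction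
   (1 + u) (t_(k+1) - d) <= u (t_k - d) with d = (1 - chi) eps / 4 and u = u_lam.
   As t_j > 2 d, iterating it along the cycle and using exp (-1/(1+u)) >= u/(1+u)
   bounds j - i. *)

Section RealInequalities.
Variable R : realType.
Implicit Types (u d e T D K M L lam : R) (a : nat -> R).

(* The paper's u_lambda, with e standing for (1 - chi) eps. *)
Definition null_rate M L lam e := 4 * lam * (2 * M ^+ 2 + e * L) / e.

Lemma null_rate_ge0 M L lam e : 0 <= L -> 0 <= lam -> 0 <= e -> 0 <= null_rate M L lam e.
Proof.
move=> L0 lam0 e0; apply: divr_ge0 => //; apply: mulr_ge0; first lra.
by apply: addr_ge0; [rewrite mulr_ge0 // sqr_ge0 | exact: mulr_ge0].
Qed.

Lemma le0_of_linear_le_quadratic D K : 0 <= K ->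
  (forall s, 0 < s < 1 -> s * D <= s ^+ 2 * K) -> D <= 0.
Proof.
move=> K0 hs; rewrite leNgt; apply/negP => D0.
pose s := D / (2 * (D + K + 1)).
have s0 : 0 < s by rewrite divr_gt0 //; lra.
have sK : s * (2 * (D + K + 1)) = D by rewrite mulfVK // gt_eqF //; lra.
have s1 : s < 1 by nra.
have := hs s; rewrite s0 s1 expr2 -mulrA ler_pM2l // => /(_ isT).
nra.
Qed.

Lemma gap_recursion M L lam e D (t0 t1 : R) :
  0 <= M -> 0 <= L -> 0 < lam -> 0 < e -> 0 <= D ->
  t1 <= t0 - D ^+ 2 / (2 * lam) -> t1 <= (2 * M + L * D) * D ->
  (1 + null_rate M L lam e) * (t1 - e / 4) <= null_rate M L lam e * (t0 - e / 4).
Proof.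
move=> M0 L0 lam0 e0 D0 hdesc hlin; set u := null_rate M L lam e.
have u0 : 0 <= u by rewrite null_rate_ge0 // ltW.
have uD : u * (D ^+ 2 / (2 * lam)) = 4 * M ^+ 2 * D ^+ 2 / e + 2 * L * D ^+ 2.
  by rewrite /u /null_rate; field; rewrite !gt_eqF.
have amgm : 2 * M * D <= e / 4 + 4 * M ^+ 2 * D ^+ 2 / e.
  have -> : e / 4 + 4 * M ^+ 2 * D ^+ 2 / e = 2 * M * D + (e / 2 - 2 * M * D) ^+ 2 / e.
    by field; rewrite gt_eqF.
  by rewrite lerDl divr_ge0 ?sqr_ge0 ?ltW.
have ut1 : u * t1 <= u * (t0 - D ^+ 2 / (2 * lam)) by rewrite ler_wpM2l.
have LD : 0 <= L * D ^+ 2 by rewrite mulr_ge0 ?sqr_ge0.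
rewrite mulrBr uD in ut1.
nra.
Qed.

Lemma natr_lt_ln_of_geometric u d T (m : nat) : 0 <= u -> 0 < d ->
  d * (1 + u) ^+ m < u ^+ m * T -> m%:R < (1 + u) * ln (T / d).
Proof.
move=> u0 d0 hT.
have u1 : 0 < 1 + u by lra.
have pm : 0 < (1 + u) ^+ m by rewrite exprn_gt0.
have T0 : 0 < T.
  rewrite ltNge; apply/negP => T0.
  have : u ^+ m * T <= 0 by rewrite mulr_ge0_le0 ?exprn_ge0.
  have : 0 < d * (1 + u) ^+ m by rewrite mulr_gt0.
  lra.
pose y := m%:R / (1 + u).
have ue : u <= (1 + u) * expR (- (1 + u)^-1).
  have {1}-> : u = (1 + u) * (1 + - (1 + u)^-1) by field; rewrite gt_eqF.
  by apply: ler_wpM2l; [exact: ltW | exact: expR_ge1Dx].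
have um : u ^+ m <= (1 + u) ^+ m * expR (- y).
  rewrite /y -mulrN expRM_natl -exprMn lerXn2r // nnegrE.
  by rewrite mulr_ge0 ?expR_ge0 ?ltW.
have dy : d < expR (- y) * T.
  rewrite -(ltr_pM2r pm); apply: lt_le_trans hT _.
  rewrite [X in _ <= X](_ : _ = (1 + u) ^+ m * expR (- y) * T); last by ring.
  by apply: ler_wpM2r; [exact: ltW | exact: um].
have ey : expR y < T / d.
  by rewrite ltr_pdivlMr // mulrC -ltr_pdivlMr ?expR_gt0 // -expRN mulrC.
have : y < ln (T / d) by rewrite -ltr_expR lnK // posrE divr_gt0.
by rewrite ltr_pdivrMr // mulrC.
Qed.

Lemma contraction_pow u d a (m : nat) : 0 <= u ->
  (forall k, (k < m)%N -> (1 + u) * (a k.+1 - d) <= u * (a k - d)) ->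
  (1 + u) ^+ m * (a m - d) <= u ^+ m * (a 0 - d).
Proof.
move=> u0; elim: m => [|m IH] hrec; first by rewrite !expr0 !mul1r.
have IHm : (1 + u) ^+ m * (a m - d) <= u ^+ m * (a 0 - d).
  by apply: IH => k km; rewrite hrec // ltnS ltnW.
rewrite exprSr -mulrA exprS -mulrA.
apply: le_trans (_ : (1 + u) ^+ m * (u * (a m - d)) <= _).
  by rewrite ler_wpM2l ?exprn_ge0 ?hrec //; lra.
by rewrite mulrCA ler_wpM2l.
Qed.

Lemma steps_lt_ln_of_contraction u d a (m : nat) : 0 <= u -> 0 < d ->
  (forall k, (k < m)%N -> (1 + u) * (a k.+1 - d) <= u * (a k - d)) ->
  2 * d < a m -> m%:R < (1 + u) * ln (a 0 / d).
Proof.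
move=> u0 d0 hrec ham; apply: natr_lt_ln_of_geometric => //.
have pm : 0 < (1 + u) ^+ m by rewrite exprn_gt0 //; lra.
apply: (@lt_le_trans _ _ ((1 + u) ^+ m * (a m - d))).
  by rewrite mulrC ltr_pM2l //; lra.
apply: le_trans (contraction_pow u0 hrec) _.
by rewrite ler_wpM2l ?exprn_ge0 //; lra.
Qed.

End RealInequalities.

Lemma eq_stationary (T : Type) (a : nat -> T) (i j : nat) :
  (forall k, (i <= k < j)%N -> a k.+1 = a k) -> forall k, (i <= k <= j)%N -> a k = a i.
Proof.
move=> step; elim=> [|k IH] /andP[ik kj]; first by move: ik; rewrite leqn0 => /eqP->.
move: ik; rewrite leq_eqVlt ltnS => /orP[/eqP-> // | ik].
by rewrite step ?IH ?ik ?kj ?(ltnW kj).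
Qed.

Section InnerProduct.
Variables (R : realType) (n : nat).
Implicit Types (a b c : 'rV[R]_n) (s : R).

Lemma dotvC a b : dotv a b = dotv b a.
Proof. by apply: eq_bigr => k _; rewrite mulrC. Qed.

Lemma dotvDl a b c : dotv (a + b) c = dotv a c + dotv b c.
Proof. by rewrite /dotv -big_split; apply: eq_bigr => k _; rewrite !mxE mulrDl. Qed.

Lemma dotvBl a b c : dotv (a - b) c = dotv a c - dotv b c.
Proof. by rewrite /dotv -sumrB; apply: eq_bigr => k _; rewrite !mxE mulrBl. Qed.

Lemma dotvZl s a b : dotv (s *: a) b = s * dotv a b.
Proof. by rewrite /dotv mulr_sumr; apply: eq_bigr => k _; rewrite !mxE mulrA. Qed.

Lemma dotvDr a b c : dotv a (b + c) = dotv a b + dotv a c.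
Proof. by rewrite dotvC dotvDl !(dotvC a). Qed.

Lemma dotvBr a b c : dotv a (b - c) = dotv a b - dotv a c.
Proof. by rewrite dotvC dotvBl !(dotvC a). Qed.

Lemma dotvZr s a b : dotv a (s *: b) = s * dotv a b.
Proof. by rewrite dotvC dotvZl dotvC. Qed.

Lemma dotv_ge0 a : 0 <= dotv a a.
Proof. by apply: sumr_ge0 => k _; rewrite -expr2 sqr_ge0. Qed.

Lemma norm2_ge0 a : 0 <= norm2 a.
Proof. exact: sqrtr_ge0. Qed.

Lemma norm2_sqr a : norm2 a ^+ 2 = dotv a a.
Proof. by rewrite sqr_sqrtr // dotv_ge0. Qed.

Lemma dotv_sqr_le a b : dotv a b ^+ 2 <= dotv a a * dotv b b.
Proof.
set A := dotv a a; set B := dotv b b; set C := dotv a b.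
have quad s : 0 <= s ^+ 2 * A - 2 * s * C + B.
  have := dotv_ge0 (s *: a - b).
  rewrite dotvBl !dotvBr !dotvZl !dotvZr (dotvC b a) -/A -/B -/C.
  by congr (_ <= _); ring.
have [A0 | /negPf A_neq0] := eqVneq A 0.
  have [-> | C_neq0] := eqVneq C 0; first by rewrite A0 expr0n mul0r.
  have := quad ((B + 1) / (2 * C)); rewrite A0.
  have -> : 2 * ((B + 1) / (2 * C)) * C = B + 1 by field.
  lra.
have A_gt0 : 0 < A by rewrite lt_def A_neq0 dotv_ge0.
have := quad (C / A).
have -> : (C / A) ^+ 2 * A - 2 * (C / A) * C + B = (A * B - C ^+ 2) / A.
  by field; rewrite A_neq0.
by rewrite pmulr_lge0 ?invr_gt0 // subr_ge0.
Qed.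

Lemma dotv_le_norm2 a b : dotv a b <= norm2 a * norm2 b.
Proof.
rewrite /norm2 -sqrtrM ?dotv_ge0 //; apply: le_trans (ler_norm _) _.
by rewrite -sqrtr_sqr ler_sqrt ?dotv_sqr_le ?mulr_ge0 ?dotv_ge0.
Qed.

End InnerProduct.

Section ProxGrowth.
Variables (R : realType) (n : nat).
Local Notation vec := 'rV[R]_n.

Lemma prox_argmin_quadratic_growth (m g : vec -> \bar R) (lam : R) (c x y : vec)
    (mx gx my gy : R) :
  convex_fun m -> convex_fun g -> 0 < lam -> is_argmin (proxobj m g lam c) x ->
  m x = mx%:E -> g x = gx%:E -> m y = my%:E -> g y = gy%:E ->
  mx + gx + norm2 (x - c) ^+ 2 / (2 * lam) + norm2 (y - x) ^+ 2 / (2 * lam)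
    <= my + gy + norm2 (y - c) ^+ 2 / (2 * lam).
Proof.
move=> m_cvx g_cvx lam0 xmin emx egx emy egy.
rewrite !norm2_sqr.
set P := dotv (x - c) (x - c); set W := dotv (y - x) (y - x).
set C := dotv (x - c) (y - x); set il := (2 * lam)^-1.
have il0 : 0 < il by rewrite invr_gt0; lra.
have W0 : 0 <= W by exact: dotv_ge0.
have eyc : dotv (y - c) (y - c) = P + 2 * C + W.
  have -> : y - c = (x - c) + (y - x) by apply/rowP => k; rewrite !mxE; ring.
  by rewrite dotvDl (dotvDr (x - c)) (dotvDr (y - x)) (dotvC (y - x)) -/P -/W -/C; ring.
(* compare x with the points x + s (y - x), 0 < s < 1, of the segment [x, y] *)
suff : mx + gx - my - gy - 2 * C * il <= 0 by rewrite eyc; nra.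
apply: (le0_of_linear_le_quadratic (K := W * il)) => [|s s01].
  by rewrite mulr_ge0 // ltW.
have := xmin (s *: y + (1 - s) *: x); rewrite /proxobj.
have -> : s *: y + (1 - s) *: x - c = (x - c) + s *: (y - x).
  by apply/rowP => k; rewrite !mxE; ring.
have := m_cvx y x s s01; have := g_cvx y x s s01.
rewrite emx egx emy egy !norm2_sqr (dotvDl (x - c) (s *: (y - x))).
rewrite (dotvDr (x - c) (x - c)) (dotvDr (s *: (y - x))) !dotvZl !dotvZr (dotvC (y - x)).
rewrite -/P -/W -/C -/il -!EFinM -!EFinD => gs ms xs.
have := le_trans xs (leeD (leeD ms gs) (lexx _)).
rewrite -!EFinD lee_fin; nra.
Qed.

End ProxGrowth.

Section ExtendedReals.
Variable R : realType.

Lemma EFin_of_neqNy_ltey (e : \bar R) : (e != -oo)%E -> (e < +oo)%E -> exists r, e = r%:E.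
Proof. by case: e => [r| |] // _ _; exists r. Qed.

Lemma fin_summands_of_gap (a b : \bar R) (p q t : R) : (a != -oo)%E -> (b != -oo)%E ->
  t%:E = (p%:E - (a + b + q%:E))%E -> exists ra rb, a = ra%:E /\ b = rb%:E.
Proof. by case: a => [ra| |]; case: b => [rb| |] // _ _; exists ra, rb. Qed.

Lemma cvx_neqNy n (g : 'rV[R]_n -> \bar R) : cvx g -> forall y, (g y != -oo)%E.
Proof. by case=> -[g_neqNy _] _ _ y; apply/eqP. Qed.

End ExtendedReals.

Section NullSteps.
Variables (R : realType) (n : nat).
Local Notation vec := 'rV[R]_n.
Variables (f h : vec -> \bar R) (f' : vec -> vec) (M L : R).
Hypotheses (M_ge0 : 0 <= M) (L_ge0 : 0 <= L) (f_cvx : cvx f) (h_cvx : cvx h).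
Hypothesis f'_subgrad : forall u, u \in edom h -> subgrad f u (f' u).
Hypothesis f'_lip : forall u v, u \in edom h -> v \in edom h ->
  norm2 (f' u - f' v) <= 2 * M + L * norm2 (u - v).

Lemma null_step_descent (c x0 x1 : vec) (m0 m1 : vec -> \bar R) (lam pb0 pb1 t0 t1 : R) :
  0 < lam -> pb1 <= pb0 ->
  t0%:E = (pb0%:E - (m0 x0 + h x0 + (norm2 (x0 - c) ^+ 2 / (2 * lam))%:E))%E ->
  t1%:E = (pb1%:E - (m1 x1 + h x1 + (norm2 (x1 - c) ^+ 2 / (2 * lam))%:E))%E ->
  BU_out f h f' c x0 m0 lam m1 ->
  t1 <= t0 - norm2 (x1 - x0) ^+ 2 / (2 * lam).
Proof.
move=> lam0 pb10 et0 et1 [m1_cvx [mb [[mb_cvx _] emb xmin mb_lin_le _]]].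
rewrite -emb in et0.
have [a0 [b0 [ea0 eb0]]] := fin_summands_of_gap (cvx_neqNy mb_cvx x0) (cvx_neqNy h_cvx x0) et0.
have [a1 [b1 [ea1 eb1]]] := fin_summands_of_gap (cvx_neqNy m1_cvx x1) (cvx_neqNy h_cvx x1) et1.
have mb_le : (mb x1 <= a1%:E)%E.
  by rewrite -ea1; apply: le_trans (mb_lin_le x1); rewrite le_max lexx.
have [a1' ea1'] := EFin_of_neqNy_ltey (cvx_neqNy mb_cvx x1) (le_lt_trans mb_le (ltry a1)).
have [[_ _ mb_conv] [_ _ h_conv]] := (mb_cvx, h_cvx).
have := prox_argmin_quadratic_growth mb_conv h_conv lam0 xmin ea0 eb0 ea1' eb1.
move: et0 et1 mb_le; rewrite ea0 eb0 ea1 eb1 ea1' -!EFinD lee_fin => -[->] -[->].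
lra.
Qed.

Lemma null_step_linearization (c x0 x1 : vec) (m1 : vec -> \bar R) (lam chi pb1 t1 : R) :
  0 < lam -> chi <= 1 ->
  x0 \in edom h -> (lin f f' x0 x1 <= m1 x1)%E -> (m1 x1 != -oo)%E ->
  t1%:E = (pb1%:E - (m1 x1 + h x1 + (norm2 (x1 - c) ^+ 2 / (2 * lam))%:E))%E ->
  (pb1%:E <= f x1 + h x1 + (chi / (2 * lam) * norm2 (x1 - c) ^+ 2)%:E)%E ->
  t1 <= (2 * M + L * norm2 (x1 - x0)) * norm2 (x1 - x0).
Proof.
move=> lam0 chi1 x0h lin_le m1_fin et1 pb1_le.
have [a1 [b1 [ea1 eb1]]] := fin_summands_of_gap m1_fin (cvx_neqNy h_cvx x1) et1.
have x1h : x1 \in edom h by rewrite inE /edom /= eb1 ltry.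
have [fx0_fin sg0] := f'_subgrad x0h.
have [fx1_fin sg1] := f'_subgrad x1h.
have [r0 er0] := EFin_of_neqNy_ltey (cvx_neqNy f_cvx x0) fx0_fin.
have [r1 er1] := EFin_of_neqNy_ltey (cvx_neqNy f_cvx x1) fx1_fin.
have := sg1 x0; move: lin_le et1 pb1_le; rewrite /lin ea1 eb1 er0 er1.
rewrite -!EFinD !lee_fin => lin_le -[->] pb1_le sg1x0.
have gap : dotv (f' x1 - f' x0) (x1 - x0) <= (2 * M + L * norm2 (x1 - x0)) * norm2 (x1 - x0).
  apply: le_trans (dotv_le_norm2 _ _) _.
  by rewrite ler_wpM2r ?norm2_ge0 ?f'_lip.
have N1 : 0 <= (1 - chi) * (norm2 (x1 - c) ^+ 2 / (2 * lam)).
  by rewrite mulr_ge0 ?divr_ge0 ?sqr_ge0 //; lra.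
rewrite dotvBl !dotvBr in gap; rewrite !dotvBr in lin_le sg1x0.
lra.
Qed.

Lemma null_step_gap_recursion (c x0 x1 : vec) (m0 m1 : vec -> \bar R)
    (lam chi e pb0 pb1 t0 t1 : R) :
  0 < lam -> chi <= 1 -> 0 < e ->
  t0%:E = (pb0%:E - (m0 x0 + h x0 + (norm2 (x0 - c) ^+ 2 / (2 * lam))%:E))%E ->
  t1%:E = (pb1%:E - (m1 x1 + h x1 + (norm2 (x1 - c) ^+ 2 / (2 * lam))%:E))%E ->
  pb1%:E = mine pb0%:E (f x1 + h x1 + (chi / (2 * lam) * norm2 (x1 - c) ^+ 2)%:E)%E ->
  BU_out f h f' c x0 m0 lam m1 ->
  (1 + null_rate M L lam e) * (t1 - e / 4) <= null_rate M L lam e * (t0 - e / 4).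
Proof.
move=> lam0 chi1 e0 et0 et1 epb BU.
have [m1_cvx [mb [[mb_cvx _] emb _ mb_lin_le _]]] := BU.
have x0h : x0 \in edom h.
  rewrite -emb in et0.
  have [_ [b0 [_ eb0]]] := fin_summands_of_gap (cvx_neqNy mb_cvx x0) (cvx_neqNy h_cvx x0) et0.
  by rewrite inE /edom /= eb0 ltry.
apply: (gap_recursion M_ge0 L_ge0 lam0 e0 (norm2_ge0 (x1 - x0))).
  by apply: null_step_descent lam0 _ et0 et1 BU; rewrite -lee_fin epb ge_min lexx.
apply: null_step_linearization lam0 chi1 x0h _ (cvx_neqNy m1_cvx x1) et1 _.
  by apply: le_trans (mb_lin_le x1); rewrite le_max lexx orbT.
by rewrite epb ge_min lexx orbT.
Qed.

Section Cycle.
Variables (phistar : R) (x0hat : vec) (chi lam0 eps : R) (Nbar J : nat).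
Variables (lam : nat -> R) (ctr : nat -> vec) (mdl : nat -> vec -> \bar R).
Variables (x : nat -> vec) (Nc : nat -> nat) (pb t : nat -> R).
Hypothesis run : UPB_run f h f' phistar x0hat chi lam0 eps Nbar J lam ctr mdl x Nc pb t.

Lemma UPB_lam_gt0 : 0 < lam0 -> forall k, (1 <= k <= J)%N -> 0 < lam k.
Proof.
case: run => [[lam1 _ _ _ _] _ step] lam00.
elim=> [//|[_ _|k IH /andP[_ kJ]]]; first by rewrite lam1.
have lamk : 0 < lam k.+1 by apply: IH; rewrite (ltnW kJ).
move: (step k.+1 kJ); case: ifP => _; first by case=> ->.
by case: ifP => _ [-> *] //; rewrite divr_gt0.
Qed.

Variables (i j : nat).
Hypotheses (i_ge1 : (1 <= i)%N) (j_leJ : (j <= J)%N).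
Hypothesis in_cycle : forall k, (i < k <= j)%N -> Nc k <> 0%N.

Lemma cycle_null_update k : (i <= k < j)%N ->
  [/\ lam k.+1 = lam k, ctr k.+1 = ctr k
    & BU_out f h f' (ctr k) (x k) (mdl k) (lam k) (mdl k.+1)].
Proof.
move=> /andP[ik kj]; case: run => [_ _ step].
have Nk1 : Nc k.+1 <> 0%N by apply: in_cycle; rewrite ltnS ik.
move: (step k); rewrite (leq_trans i_ge1 ik) (leq_trans kj j_leJ) => /(_ isT).
case: ifP => _; first by case.
by case: ifP => _ [_ _ Nk0]; rewrite Nk0 in Nk1.
Qed.

Lemma cycle_gap_recursion e : 0 < lam0 -> chi <= 1 -> 0 < e ->
  forall k, (i <= k < j)%N ->
  (1 + null_rate M L (lam i) e) * (t k.+1 - e / 4) <= null_rate M L (lam i) e * (t k - e / 4).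
Proof.
move=> lam00 chi1 e0 k /andP[ik kj].
have lam_cst : lam k = lam i.
  by apply: eq_stationary => [l /cycle_null_update[]|] //; rewrite ik ltnW.
have [lamS ctrS BU] := cycle_null_update (introT andP (conj ik kj)).
have k1J : (1 <= k <= J)%N by rewrite (leq_trans i_ge1 ik) (leq_trans (ltnW kj) j_leJ).
have [_ step2 _] := run.
have [_ _ _ et0] := step2 k k1J.
have [_ _ epb et1] := step2 k.+1 (leq_trans kj j_leJ).
have Nk1 : Nc k.+1 != 0%N by apply/eqP/in_cycle; rewrite ltnS ik.
rewrite (negbTE Nk1) lamS ctrS in epb; rewrite lamS ctrS in et1.
rewrite -lam_cst; apply: null_step_gap_recursion et0 et1 epb BU => //.
exact: UPB_lam_gt0.
Qed.

End Cycle.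
End NullSteps.

Theorem lemma4p2 (R : realType) (n : nat)
    (f h : 'rV[R]_n -> \bar R) (f' : 'rV[R]_n -> 'rV[R]_n) (Mf Lf phistar : R)
    (x0hat : 'rV[R]_n) (chi lam0 eps : R) (Nbar J : nat)
    (lam : nat -> R) (ctr : nat -> 'rV[R]_n) (mdl : nat -> 'rV[R]_n -> \bar R)
    (x : nat -> 'rV[R]_n) (Nc : nat -> nat) (pb t : nat -> R) (i j : nat) :
  (* standing assumptions *)
  cvx f -> cvx h -> edom h `<=` edom f ->
  (exists xs, (f xs + h xs)%E = phistar%:E) ->
  (forall u, (phistar%:E <= f u + h u)%E) ->
  0 <= Mf -> 0 <= Lf ->
  (forall u, u \in edom h -> subgrad f u (f' u)) ->
  (forall u v, u \in edom h -> v \in edom h ->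
     norm2 (f' u - f' v) <= 2 * Mf + Lf * norm2 (u - v)) ->
  (* inputs of U-PB *)
  x0hat \in edom h -> 0 <= chi < 1 -> 0 < lam0 -> 0 < eps -> (1 <= Nbar)%N ->
  (* a run of U-PB reaching Step 2 of iterations 1..J *)
  UPB_run f h f' phistar x0hat chi lam0 eps Nbar J lam ctr mdl x Nc pb t ->
  (* j is an iteration of the cycle whose first iteration is i *)
  (1 <= i)%N -> (i <= j)%N -> (j <= J)%N -> Nc i = 0%N ->
  (forall k, (i < k <= j)%N -> Nc k <> 0%N) ->
  (* t_j > (1 - chi) eps / 2 *)
  (1 - chi) * eps / 2 < t j ->
  let u_lam := 4 * lam i * (2 * Mf ^+ 2 + (1 - chi) * eps * Lf) / ((1 - chi) * eps) in
  (j - i)%:R < (1 + u_lam) * ln (4 * t i / ((1 - chi) * eps)).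
Proof.
move=> f_cvx h_cvx _ _ _ Mf0 Lf0 f'_subgrad f'_lip _ /andP[_ chi1] lam00 eps0 _
  run i_ge1 ij j_leJ _ in_cycle tj; cbv zeta.
set e := (1 - chi) * eps in tj *; rewrite -/(null_rate Mf Lf (lam i) e).
have e0 : 0 < e by rewrite mulr_gt0 // subr_gt0.
have lam_i : 0 < lam i by apply: (UPB_lam_gt0 run lam00); rewrite i_ge1 (leq_trans ij).
have -> : 4 * t i / e = t (i + 0)%N / (e / 4) by rewrite addn0; field; rewrite gt_eqF.
apply: (steps_lt_ln_of_contraction (a := fun k => t (i + k)%N)).
- by rewrite null_rate_ge0 // ltW.
- by rewrite divr_gt0.
- move=> k kji; rewrite addnS.
  apply: (cycle_gap_recursion Mf0 Lf0 f_cvx h_cvx f'_subgrad f'_lip run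
           i_ge1 j_leJ in_cycle lam00 (ltW chi1) e0).
  by rewrite leq_addr -ltn_subRL.
- by rewrite subnKC //; lra.
Qed.
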